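(* Let $\mathfrak{g}$ be a Leibniz algebra with finite-dimensional Schur $\mathrm{Lie}$-multiplier and let $0\to\mathfrak{m}\to\mathfrak{g}^{*}\xrightarrow{\psi}\mathfrak{g}\to0$ be a $\mathrm{Lie}$-stem cover. Then $Z^{*}_{\mathrm{Lie}}(\mathfrak{g})=\psi\big(Z_{\mathrm{Lie}}(\mathfrak{g}^{*})\big)$.
   Context: Fix a field $\mathbb{K}$ with $\frac12\in\mathbb{K}$. A Leibniz algebra is a $\mathbb{K}$-vector space with a bilinear bracket satisfying $[x,[y,z]]=[[x,y],z]-[[x,z],y]$. $\mathfrak{p}^{\mathrm{ann}}$ is the span of all $[x,x]$, $\mathfrak{p}_{\mathrm{Lie}}=\mathfrak{p}/\mathfrak{p}^{\mathrm{ann}}$. $[\mathfrak{m},\mathfrak{n}]_{\mathrm{Lie}}$ is the span of all $[m,n]+[n,m]$. $Z_{\mathrm{Lie}}(\mathfrak{p})=\{z:[x,z]+[z,x]=0\ \forall x\in\mathfrak{p}\}$. A surjective homomorphism $f:\mathfrak{h}\to\mathfrak{g}$ is a $\mathrm{Lie}$-central extension if $\ker f\subseteq Z_{\mathrm{Lie}}(\mathfrak{h})$. The precise $\mathrm{Lie}$-center $Z^{*}_{\mathrm{Lie}}(\mathfrak{g})$ is the intersection of all $f(Z_{\mathrm{Lie}}(\mathfrak{h}))$ over all $\mathrm{Lie}$-central extensions $f:\mathfrak{h}\twoheadrightarrow\mathfrak{g}$. For a free presentation $0\to\mathfrak{r}\to\mathfrak{f}\to\mathfrak{g}\to0$ ($\mathfrak{f}$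 free Leibniz), $\mathcal{M}^{\mathrm{Lie}}(\mathfrak{g})=\frac{\mathfrak{r}\cap[\mathfrak{f},\mathfrak{f}]_{\mathrm{Lie}}}{[\mathfrak{f},\mathfrak{r}]_{\mathrm{Lie}}}$. An extension $0\to\mathfrak{m}\to\mathfrak{p}\to\mathfrak{g}\to0$ is a $\mathrm{Lie}$-stem cover if $\mathfrak{m}\subseteq Z_{\mathrm{Lie}}(\mathfrak{p})$, the induced map $\mathfrak{p}_{\mathrm{Lie}}\to\mathfrak{g}_{\mathrm{Lie}}$ is an isomorphism, and the induced map $\mathcal{M}^{\mathrm{Lie}}(\mathfrak{p})\to\mathcal{M}^{\mathrm{Lie}}(\mathfrak{g})$ is zero. *)

From HB Require Import structures.
From mathcomp Require Import all_boot all_order all_algebra.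
Set Implicit Arguments. Unset Strict Implicit. Unset Printing Implicit Defensive.
Import GRing.Theory.
Local Open Scope ring_scope.

Record leibnizAlg (K : fieldType) := LeibnizAlg {
  lcar :> lmodType K;
  lbr : lcar -> lcar -> lcar;
  lbr_linl : forall (a : K) (x y z : lcar),
      lbr (a *: x + y) z = a *: lbr x z + lbr y z;
  lbr_linr : forall (a : K) (x y z : lcar),
      lbr z (a *: x + y) = a *: lbr z x + lbr z y;
  lbr_leibniz : forall x y z : lcar,
      lbr x (lbr y z) = lbr (lbr x y) z - lbr (lbr x z) y
}.
Arguments lbr {K} l _ _.

Section LeibnizDefs.
Variable K : fieldType.

Definition is_subspace (A : leibnizAlg K) (W : A -> Prop) : Prop :=
  W 0 /\ forall (a : K) (x y : A), W x -> W y -> W (a *: x + y).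

Definition span (A : leibnizAlg K) (S : A -> Prop) : A -> Prop :=
  fun v => forall W : A -> Prop, is_subspace W -> (forall s, S s -> W s) -> W v.

Definition lie_bracket_span (A : leibnizAlg K) (M N : A -> Prop) : A -> Prop :=
  span (fun v => exists m n, M m /\ N n /\ v = lbr A m n + lbr A n m).

Definition ann (A : leibnizAlg K) : A -> Prop :=
  span (fun v => exists x : A, v = lbr A x x).

Definition ZLie (A : leibnizAlg K) : A -> Prop :=
  fun z => forall x : A, lbr A x z + lbr A z x = 0.

Definition allA (A : leibnizAlg K) : A -> Prop := fun _ => True.

Definition is_hom (A B : leibnizAlg K) (f : A -> B) : Prop :=
  (forall (a : K) (x y : A), f (a *: x + y) = a *: f x + f y) /\
  (forall x y : A, f (lbr A x y) = lbr B (f x) (f y)).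

Definition kernel (A B : leibnizAlg K) (f : A -> B) : A -> Prop :=
  fun x => f x = 0.

Definition surj (A B : leibnizAlg K) (f : A -> B) : Prop :=
  forall y : B, exists x : A, f x = y.

Definition is_free_on (X : Type) (F : leibnizAlg K) (i : X -> F) : Prop :=
  forall (H : leibnizAlg K) (h : X -> H),
    (exists phi : F -> H, is_hom phi /\ forall x, phi (i x) = h x) /\
    (forall phi1 phi2 : F -> H, is_hom phi1 -> is_hom phi2 ->
       (forall x, phi1 (i x) = h x) -> (forall x, phi2 (i x) = h x) ->
       forall v, phi1 v = phi2 v).

Definition is_free (F : leibnizAlg K) : Prop :=
  exists (X : Type) (i : X -> F), is_free_on i.

Definition free_presentation (F g : leibnizAlg K) (rho : F -> g) : Prop :=
  is_free F /\ is_hom rho /\ surj rho.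

(* The quotient B' / C (with C a subspace) is finite dimensional, where
   B' is a subset: there is a finite family s with B' contained in span s + C. *)
Definition fin_dim_quot (A : leibnizAlg K) (B C : A -> Prop) : Prop :=
  exists s : seq A, forall v, B v ->
    exists w u, span (fun x => x \in s) w /\ C u /\ v = w + u.

(* M^Lie(g) = (r cap [F,F]_Lie) / [F,r]_Lie computed from the presentation *)
Definition multiplier_num (F g : leibnizAlg K) (rho : F -> g) : F -> Prop :=
  fun v => kernel rho v /\ lie_bracket_span (@allA F) (@allA F) v.
Definition multiplier_den (F g : leibnizAlg K) (rho : F -> g) : F -> Prop :=
  lie_bracket_span (@allA F) (kernel rho).

Definition fin_dim_Lie_multiplier (g : leibnizAlg K) : Prop :=
  exists (F : leibnizAlg K) (rho : F -> g), free_presentation rho /\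
    fin_dim_quot (multiplier_num rho) (multiplier_den rho).

Definition lie_central_ext (h g : leibnizAlg K) (f : h -> g) : Prop :=
  is_hom f /\ surj f /\ (forall x, kernel f x -> ZLie x).

Definition precise_Lie_center (g : leibnizAlg K) : g -> Prop :=
  fun y => forall (h : leibnizAlg K) (f : h -> g), lie_central_ext f ->
    exists z, ZLie z /\ f z = y.

(* The map M^Lie(p) -> M^Lie(g) induced by psi : p -> g, computed via free
   presentations (F,pi) of p and (f,rho) of g and a lift beta : F -> f with
   rho o beta = psi o pi, is zero. *)
Definition induced_multiplier_map_zero (p g : leibnizAlg K) (psi : p -> g) : Prop :=
  exists (F : leibnizAlg K) (pi : F -> p) (f : leibnizAlg K) (rho : f -> g),
    free_presentation pi /\ free_presentation rho /\
    forall beta : F -> f, is_hom beta -> (forall x, rho (beta x) = psi (pi x)) ->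
      forall v, multiplier_num pi v -> multiplier_den rho (beta v).

Definition lie_stem_cover (p g : leibnizAlg K) (psi : p -> g) : Prop :=
  is_hom psi /\ surj psi /\
      (forall x, kernel psi x -> ZLie x) /\
      (* induced p/p^ann -> g/g^ann is injective ... *)
      (forall x : p, ann (psi x) -> ann x) /\
      (* ... and surjective, i.e. an isomorphism *)
      (forall y : g, exists x : p, ann (psi x - y)) /\
    induced_multiplier_map_zero psi.

End LeibnizDefs.

(* Given z in Z_Lie(g* ) and a Lie-central extension f : h -> g, lift along
   free presentations pi : F -> g* and rho : f' -> g to homomorphisms
   beta : F -> f' and d : f' -> h, and put gamma = d \o beta, so that
   f \o gamma = psi \o pi.  As d maps ker rho into ker f, which is Lie-central,
   it kills [f', ker rho]_Lie, and the stem-cover hypothesis says that beta maps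
   ker pi /\ [F, F]_Lie there; so gamma kills ker pi /\ [F, F]_Lie.  For
   pi u = z and x in h pick v with psi (pi v) = f x; since ker f is Lie-central,
   [x, gamma u] + [gamma u, x] = gamma ([v, u] + [u, v]) = 0.  Hence gamma u is
   in Z_Lie(h) and lies over psi z. *)
From mathcomp Require Import all_boot all_order all_algebra.
From Stdlib Require Import IndefiniteDescription.
Set Implicit Arguments. Unset Strict Implicit. Unset Printing Implicit Defensive.
Import GRing.Theory.
Local Open Scope ring_scope.

Section LeibnizLemmas.
Variable K : fieldType.
Implicit Types A B C F : leibnizAlg K.

Definition symbr A (x y : A) : A := lbr A x y + lbr A y x.

Lemma lbrDl A (x y z : A) : lbr A (x + y) z = lbr A x z + lbr A y z.
Proof. by have := lbr_linl 1 x y z; rewrite !scale1r. Qed.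

Lemma lbrDr A (x y z : A) : lbr A z (x + y) = lbr A z x + lbr A z y.
Proof. by have := lbr_linr 1 x y z; rewrite !scale1r. Qed.

Lemma symbrDl A (x y z : A) : symbr (x + y) z = symbr x z + symbr y z.
Proof. by rewrite /symbr lbrDl lbrDr addrACA. Qed.

Section Hom.
Variables (A B : leibnizAlg K) (f : A -> B).
Hypothesis hom_f : is_hom f.

Lemma hom0 : f 0 = 0.
Proof.
have := (proj1 hom_f) 1 0 0; rewrite !scale1r !addr0 => f00.
by apply/(addrI (f 0)); rewrite addr0 -f00.
Qed.

Lemma homD x y : f (x + y) = f x + f y.
Proof. by have := (proj1 hom_f) 1 x y; rewrite !scale1r. Qed.

Lemma homB x y : f (x - y) = f x - f y.
Proof.
have := (proj1 hom_f) (-1) y 0; rewrite hom0 !scaleN1r !addr0 => fN.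
by rewrite homD fN.
Qed.

Lemma hom_symbr x y : f (symbr x y) = symbr (f x) (f y).
Proof. by rewrite /symbr homD !(proj2 hom_f). Qed.

End Hom.

Lemma hom_comp A B C (f : A -> B) (g : B -> C) :
  is_hom f -> is_hom g -> is_hom (g \o f).
Proof.
by move=> [f_lin f_br] [g_lin g_br]; split=> *; rewrite /= ?f_lin ?g_lin ?f_br ?g_br.
Qed.

Lemma span_gen A (S : A -> Prop) s : S s -> span S s.
Proof. by move=> Ss W _; apply. Qed.

Lemma hom_lie_bracket_span_ZLie0 A B (d : A -> B) (M N : A -> Prop) :
  is_hom d -> (forall n, N n -> ZLie (d n)) ->
  forall v, lie_bracket_span M N v -> d v = 0.
Proof.
move=> hom_d dN_central v span_v; apply: (span_v (fun w => d w = 0)); first split.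
- exact: hom0.
- by move=> a x y dx0 dy0; rewrite (proj1 hom_d) dx0 dy0 scaler0 addr0.
move=> _ [m [n [_ [Nn ->]]]].
by have := hom_symbr hom_d m n; rewrite /symbr => ->; apply: dN_central.
Qed.

Lemma symbr_ker_central A B (f : A -> B) x x' z :
  is_hom f -> (forall k, kernel f k -> ZLie k) -> f x = f x' ->
  symbr x z = symbr x' z.
Proof.
move=> hom_f ker_central fxx'.
have central : ZLie (x - x') by apply: ker_central; rewrite /kernel homB // fxx' subrr.
have sym0 : symbr (x - x') z = 0 by rewrite /symbr addrC; apply: central.
by rewrite -{1}(subrK x' x) symbrDl sym0 add0r.
Qed.

Lemma free_lift F A B (r : F -> A) (f : B -> A) :
  is_free F -> is_hom r -> is_hom f -> surj f ->
  exists g : F -> B, is_hom g /\ forall v, f (g v) = r v.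
Proof.
move=> [X [i free_i]] hom_r hom_f surj_f.
have pick x : {b : B | f b = r (i x)}.
  by apply: constructive_indefinite_description; apply: surj_f.
have [[phi [hom_phi phi_i]] _] := free_i B (fun x => sval (pick x)).
exists phi; split=> //.
have [_ unique] := free_i A (r \o i).
apply: (unique (f \o phi) r) => // [|x].
- exact: hom_comp.
- by rewrite /= phi_i; case: (pick x).
Qed.

Lemma multiplier_num_symbr F A (pi : F -> A) u v :
  is_hom pi -> ZLie (pi u) -> multiplier_num pi (symbr v u).
Proof.
move=> hom_pi central_u; split; first by rewrite /kernel hom_symbr //; apply: central_u.
by apply: span_gen; exists v, u.
Qed.

Section LiftToCentralExtension.
Variables (F p g h : leibnizAlg K) (pi : F -> p) (psi : p -> g) (f : h -> g).
Variable gamma : F -> h.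
Hypotheses (hom_gamma : is_hom gamma) (hom_pi : is_hom pi) (hom_f : is_hom f).
Hypothesis ker_f_central : forall k, kernel f k -> ZLie k.
Hypothesis surj_psi_pi : surj (psi \o pi).
Hypothesis f_gamma : forall v, f (gamma v) = psi (pi v).
Hypothesis gamma_multiplier0 : forall v, multiplier_num pi v -> gamma v = 0.

Lemma ZLie_lift u : ZLie (pi u) -> ZLie (gamma u).
Proof.
move=> central_u x; have [v psi_pi_v] := surj_psi_pi (f x).
have fx : f x = f (gamma v) by rewrite f_gamma -psi_pi_v.
rewrite -[_ + _]/(symbr x (gamma u)) (symbr_ker_central _ hom_f ker_f_central fx).
by rewrite -hom_symbr // gamma_multiplier0 //; apply: multiplier_num_symbr.
Qed.

End LiftToCentralExtension.

Lemma ZLie_image_precise_Lie_center (p g : leibnizAlg K) (psi : p -> g) (z : p) :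
  is_hom psi -> surj psi -> induced_multiplier_map_zero psi ->
  ZLie z -> precise_Lie_center (psi z).
Proof.
move=> hom_psi surj_psi [F [pi [f' [rho [[free_F [hom_pi surj_pi]]
  [[free_f' [hom_rho surj_rho]] multiplier0]]]]]] central_z h f [hom_f [surj_f ker_f_central]].
have [u pi_u] := surj_pi z.
have [beta [hom_beta rho_beta]] := free_lift free_F (hom_comp hom_pi hom_psi) hom_rho surj_rho.
have [d [hom_d f_d]] := free_lift free_f' hom_rho hom_f surj_f.
have surj_psi_pi : surj (psi \o pi).
  by move=> y; have [a <-] := surj_psi y; have [v <-] := surj_pi a; exists v.
have d_den0 : forall w, multiplier_den rho w -> d w = 0.
  apply: hom_lie_bracket_span_ZLie0 => // k rho_k0.
  by apply: ker_f_central; rewrite /kernel f_d.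
exists (d (beta u)); split; last by rewrite f_d rho_beta /= pi_u.
apply: (ZLie_lift (hom_comp hom_beta hom_d) hom_pi hom_f ker_f_central surj_psi_pi).
- by move=> v; rewrite /= f_d rho_beta.
- by move=> v num_v; apply: d_den0; apply: (multiplier0 beta).
- by rewrite pi_u.
Qed.

End LeibnizLemmas.

Theorem mainTheorem19 (K : fieldType) (two_unit : (2%:R : K) != 0)
  (g gstar : leibnizAlg K) (psi : gstar -> g) :
  fin_dim_Lie_multiplier g ->
  lie_stem_cover psi ->
  forall y : g, precise_Lie_center y <-> exists z : gstar, ZLie z /\ psi z = y.
Proof.
move=> _ [hom_psi [surj_psi [ker_psi_central [_ [_ multiplier0]]]]] y; split.
- by apply; split.
- by move=> [z [central_z <-]]; apply: ZLie_image_precise_Lie_center.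
Qed.
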